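(* Let $r\ge1$ and let $\tau$ be a permutation of $F^r$ with $\tau(\mathbf 0)=\mathbf 0$. Then for any $a,b\in F^r$ the permutation $(\sigma_a|\sigma_b)$ of the points, defined by $(\{c\},\emptyset)\mapsto(\{c+a\},\emptyset)$ and $(\emptyset,\{c\})\mapsto(\emptyset,\{c+b\})$ for all $c\in F^r$, belongs to $\mathrm{Aut}(SQS_\tau)$. In particular, $\mathrm{Aut}(SQS_\tau)$ either acts transitively on the points of $SQS_\tau$ or has exactly two orbits on points, namely $\{(\{a\},\emptyset):a\in F^r\}$ and $\{(\emptyset,\{a\}):a\in F^r\}$.
   Context: $F=\mathrm{GF}(2)$, $\mathbf 0$ is the all-zero vector. The point set consists of the $2^{r+1}$ symbols $(\{a\},\emptyset)$ and $(\emptyset,\{a\})$, $a\in F^r$; a pair $(X,Y)$ with $X,Y\subseteq F^r$ denotes the set of points $\{(\{x\},\emptyset):x\in X\}\cup\{(\emptyset,\{y\}):y\in Y\}$. $SQS_\tau=Q_0\cup Q_1\cup Q_\tau$ where $Q_0=\{(\{a,b,c,d\},\emptyset): a,b,c,d\in F^r \text{ pairwise distinct}, a+b+c+d=\mathbf 0\}$, $Q_1=\{(\emptyset,\{a,b,c,d\}): a,b,c,d\in F^r \text{ pairwise distinct}, a+b+c+d=\mathbf 0\}$, $Q_\tau=\{(\{a,c\},\{b,d\}): a,b,c,d\in F^r, \tau(a+c)=b+d\neq\mathbf 0\}$. $\mathrm{Aut}(SQS_\tau)$ is the group of permutations of the point set mapping the set of quadruples onto itself. *)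

From HB Require Import structures.
From mathcomp Require Import all_boot all_algebra all_fingroup.
Set Implicit Arguments. Unset Strict Implicit. Unset Printing Implicit Defensive.
Import GRing.Theory.
Local Open Scope ring_scope.

Definition vec (r : nat) := 'rV['F_2]_r.

(* Points: inl a stands for ({a},∅), inr a stands for (∅,{a}). *)
Definition pt (r : nat) := (vec r + vec r)%type.

Section SQS.
Variable r : nat.
Variable tau : {perm vec r}.

Definition Q0 : {set {set pt r}} :=
  [set Q : {set pt r} | [exists a : vec r, exists b : vec r, exists c : vec r,
     exists d : vec r, [&& Q == [set (inl a : pt r); inl b; inl c; inl d],
       uniq [:: a; b; c; d] & a + b + c + d == 0]]].

Definition Q1 : {set {set pt r}} :=
  [set Q : {set pt r} | [exists a : vec r, exists b : vec r, exists c : vec r,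
     exists d : vec r, [&& Q == [set (inr a : pt r); inr b; inr c; inr d],
       uniq [:: a; b; c; d] & a + b + c + d == 0]]].

Definition Qtau : {set {set pt r}} :=
  [set Q : {set pt r} | [exists a : vec r, exists b : vec r, exists c : vec r,
     exists d : vec r, [&& Q == [set (inl a : pt r); inl c; inr b; inr d],
       tau (a + c) == b + d & b + d != 0]]].

Definition SQS : {set {set pt r}} := Q0 :|: Q1 :|: Qtau.

Definition AutSQS : {set {perm pt r}} :=
  [set s : {perm pt r} | [set s @: (B : {set pt r}) | B in SQS] == SQS].

Definition Aut_orbit (x : pt r) : {set pt r} := [set (s : {perm pt r}) x | s in AutSQS].

End SQS.

Definition left_pts (r : nat) : {set pt r} := [set (inl a : pt r) | a : vec r].
Definition right_pts (r : nat) : {set pt r} := [set (inr a : pt r) | a : vec r].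

Definition sigma_fun (r : nat) (a b : vec r) (x : pt r) : pt r :=
  match x with inl c => inl (c + a) | inr c => inr (c + b) end.

Lemma sigma_fun_inj (r : nat) (a b : vec r) : injective (sigma_fun a b).
Proof.
case=> [x|x] [y|y] //= [] /addIr -> //.
Qed.

Definition sigma (r : nat) (a b : vec r) : {perm pt r} := perm (@sigma_fun_inj r a b).

From HB Require Import structures.
From mathcomp Require Import all_boot all_algebra all_fingroup.
Set Implicit Arguments. Unset Strict Implicit. Unset Printing Implicit Defensive.
Import GRing.Theory.
Local Open Scope ring_scope.

(* In characteristic 2 the translation vectors cancel in pairs, so
   translating the points of a block (by a on the left half, by b on the right
   half) preserves every condition defining Q0, Q1 and Q_tau.  The automorphism
   group thus contains all translations and is transitive on each half; as
   orbits partition the points, either there is a single orbit or the orbits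
   are the two halves. *)

Lemma addrr_F2 (V : lmodType 'F_2) (v : V) : v + v = 0.
Proof. by rewrite -mulr2n -scaler_nat pchar_Fp_0 ?scale0r. Qed.

Lemma addrDD_F2 (V : lmodType 'F_2) (x y a : V) : (x + a) + (y + a) = x + y.
Proof. by rewrite addrACA addrr_F2 addr0. Qed.

Lemma imset_set4 (aT rT : finType) (f : aT -> rT) (x1 x2 x3 x4 : aT) :
  f @: [set x1; x2; x3; x4] = [set f x1; f x2; f x3; f x4].
Proof. by rewrite !imsetU !imset_set1. Qed.

Section BlockAutomorphisms.
Variables (T : finType) (S : {set {set T}}).

Definition block_aut : {set {perm T}} :=
  [set s : {perm T} | [set s @: (B : {set T}) | B in S] == S].

Lemma block_autP (s : {perm T}) :
  reflect (forall B, B \in S -> s @: B \in S) (s \in block_aut).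
Proof.
rewrite inE; apply: (iffP idP) => [/eqP {2}<- B SB | sS]; first exact: imset_f.
rewrite eqEcard card_imset ?leqnn ?andbT; last exact/imset_inj/perm_inj.
by apply/subsetP => _ /imsetP[B SB ->]; apply: sS.
Qed.

Lemma group_set_block_aut : group_set block_aut.
Proof.
apply/group_setP; split=> [|s t /block_autP sS /block_autP tS].
  by apply/block_autP => B SB; rewrite (eq_imset _ (perm1 (T := T))) imset_id.
apply/block_autP => B SB; rewrite (eq_imset _ (permM s t)) imset_comp.
by apply/tS/sS.
Qed.

Canonical block_aut_group := group group_set_block_aut.

End BlockAutomorphisms.

Section TwoHalves.
Variables (gT : finGroupType) (T : finType) (to : {action gT &-> T}).
Variables (G : {group gT}) (L R : {set T}) (x0 y0 : T).
Hypotheses (LUR : L :|: R = setT).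
Hypotheses (sLx0 : L \subset orbit to G x0) (sRy0 : R \subset orbit to G y0).

Lemma orbit_cover_halves x : x \in L \/ x \in R.
Proof. by apply/orP; rewrite -in_setU LUR inE. Qed.

Lemma transitive_or_orbits_halves :
  (forall x y, y \in orbit to G x) \/ [set orbit to G x | x : T] = [set L; R].
Proof.
have [y0x0 | y0x0'] := boolP (y0 \in orbit to G x0).
  have orbit_x0 x : x \in orbit to G x0.
    have [Lx | Rx] := orbit_cover_halves x; first exact: (subsetP sLx0).
    exact: orbit_trans (subsetP sRy0 x Rx) y0x0.
  by left=> x y; have /orbit_eqP-> := orbit_x0 x; apply: orbit_x0.
have orbit_x0E : orbit to G x0 = L.
  apply/eqP; rewrite eqEsubset sLx0 andbT; apply/subsetP => z x0z.
  have [// | Rz] := orbit_cover_halves z.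
  by case/negP: y0x0'; apply: (orbit_trans _ x0z); rewrite orbit_sym (subsetP sRy0).
have orbit_y0E : orbit to G y0 = R.
  apply/eqP; rewrite eqEsubset sRy0 andbT; apply/subsetP => z y0z.
  have [Lz | //] := orbit_cover_halves z.
  by case/negP: y0x0'; apply: (orbit_trans _ (subsetP sLx0 z Lz)); rewrite orbit_sym.
right; apply/setP => X; rewrite in_set2; apply/imsetP/orP => [[x _ ->] | ].
  have [Lx | Rx] := orbit_cover_halves x; [left | right].
    by have /orbit_eqP-> := subsetP sLx0 x Lx; rewrite orbit_x0E.
  by have /orbit_eqP-> := subsetP sRy0 x Rx; rewrite orbit_y0E.
by case=> /eqP->; [exists x0 | exists y0].
Qed.

End TwoHalves.

Section Translations.
Variables (r : nat) (tau : {perm vec r}).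

Lemma sigmaE (a b : vec r) x : sigma a b x = sigma_fun a b x.
Proof. by rewrite permE. Qed.

Lemma zero_sum_quad_translate (p q u v a : vec r) :
  uniq [:: p; q; u; v] -> p + q + u + v == 0 ->
  uniq [:: p + a; q + a; u + a; v + a] &&
  (p + a + (q + a) + (u + a) + (v + a) == 0).
Proof.
move=> uniq_pquv sum0; rewrite -addrA !addrDD_F2 addrA sum0 andbT.
by rewrite (map_inj_uniq (addIr a) [:: p; q; u; v]).
Qed.

Lemma sigma_Q0 (a b : vec r) B : B \in Q0 r -> sigma a b @: B \in Q0 r.
Proof.
rewrite !inE => /existsP[p /existsP[q /existsP[u /existsP[v /and3P[/eqP-> uniq_pquv sum_pquv]]]]].
rewrite imset_set4 !sigmaE.
apply/existsP; exists (p + a); apply/existsP; exists (q + a).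
apply/existsP; exists (u + a); apply/existsP; exists (v + a).
by rewrite eqxx zero_sum_quad_translate.
Qed.

Lemma sigma_Q1 (a b : vec r) B : B \in Q1 r -> sigma a b @: B \in Q1 r.
Proof.
rewrite !inE => /existsP[p /existsP[q /existsP[u /existsP[v /and3P[/eqP-> uniq_pquv sum_pquv]]]]].
rewrite imset_set4 !sigmaE.
apply/existsP; exists (p + b); apply/existsP; exists (q + b).
apply/existsP; exists (u + b); apply/existsP; exists (v + b).
by rewrite eqxx zero_sum_quad_translate.
Qed.

Lemma sigma_Qtau (a b : vec r) B : B \in Qtau tau -> sigma a b @: B \in Qtau tau.
Proof.
rewrite !inE => /existsP[p /existsP[q /existsP[u /existsP[v /and3P[/eqP-> tau_pu qv_neq0]]]]].
rewrite imset_set4 !sigmaE.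
apply/existsP; exists (p + a); apply/existsP; exists (q + b).
apply/existsP; exists (u + a); apply/existsP; exists (v + b).
by rewrite eqxx !addrDD_F2 tau_pu.
Qed.

Lemma sigma_aut (a b : vec r) : sigma a b \in AutSQS tau.
Proof.
apply/block_autP => B; rewrite /SQS !in_setU -!orbA.
case/or3P=> [/(sigma_Q0 a b) | /(sigma_Q1 a b) | /(sigma_Qtau a b)] sB; apply/or3P.
- exact: Or31.
- exact: Or32.
- exact: Or33.
Qed.

Lemma left_pts_sub_orbit : left_pts r \subset Aut_orbit tau (inl 0).
Proof.
apply/subsetP => _ /imsetP[c _ ->]; apply/imsetP; exists (sigma c 0).
  exact: sigma_aut.
by rewrite sigmaE /= add0r.
Qed.

Lemma right_pts_sub_orbit : right_pts r \subset Aut_orbit tau (inr 0).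
Proof.
apply/subsetP => _ /imsetP[c _ ->]; apply/imsetP; exists (sigma 0 c).
  exact: sigma_aut.
by rewrite sigmaE /= add0r.
Qed.

End Translations.

Lemma left_pts_U_right_pts r : left_pts r :|: right_pts r = setT.
Proof.
by apply/setP => -[a | a]; rewrite in_setU in_setT imset_f ?orbT.
Qed.

Theorem proposition5 (r : nat) (tau : {perm vec r}) :
  (0 < r)%N -> tau 0 = 0 ->
  (forall a b : vec r, sigma a b \in AutSQS tau) /\
  ((forall x y : pt r, y \in Aut_orbit tau x) \/
   [set Aut_orbit tau x | x : pt r] = [set left_pts r; right_pts r]).
Proof.
move=> _ _; split; first exact: sigma_aut.
exact: (transitive_or_orbits_halves (to := 'P%act) (G := block_aut_group (SQS tau))
          (left_pts_U_right_pts r) (left_pts_sub_orbit tau) (right_pts_sub_orbit tau)).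
Qed.
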